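(* For any digraph ${\tt G}$, any two sign assignments $\epsilon,\epsilon'$ on the path poset $P({\tt G})$ are isomorphic, i.e. there is $\eta\colon P({\tt G})\to\mathbb Z_2$ with $\eta(x)+\epsilon'_{x,y}\equiv\epsilon_{x,y}+\eta(y)\pmod 2$ for every covering pair $x\,\tilde\triangleleft\,y$.
   Context: A digraph ${\tt G}=(V,E)$ has finite $V$ and $E\subseteq(V\times V)\setminus\{(v,v)\}$. A multipath is a spanning subgraph (all vertices, subset of edges) each of whose connected components (of the underlying undirected graph) is an isolated vertex or a simple directed path (edges $e_1,\dots,e_k$ with target of $e_i$ equal to source of $e_{i+1}$, no repeated vertex, not a cycle). The path poset $P({\tt G})$ is the set of multipaths ordered by inclusion of edge sets. In a poset, $x\,\tilde\triangleleft\,y$ means $y$ covers $x$; a square is $x,y,y',z$ with $y\neq y'$, $x\,\tilde\triangleleft\,y\,\tilde\triangleleft\,z$, $x\,\tilde\triangleleft\,y'\,\tilde\triangleleft\,z$. A sign assignment assigns $\epsilon_{x,y}\in\mathbb Z_2$ to each covering pair such that $\epsilon_{x,y}+\epsilon_{y,z}\equiv\epsilon_{x,y'}+\epsilon_{y',z}+1\pmod 2$ for every square. *)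

From mathcomp Require Import all_boot all_order all_algebra.
Set Implicit Arguments. Unset Strict Implicit. Unset Printing Implicit Defensive.
Import GRing.Theory.
Local Open Scope ring_scope.

(* A digraph is given by a finite vertex type V and an edge set
   E : {set V * V} without loops (hypothesis stated in the theorem). *)

Section PathPoset.
Variable V : finType.

Definition uadj (S : {set V * V}) : rel V :=
  fun x y => ((x, y) \in S) || ((y, x) \in S).

Definition comp (S : {set V * V}) (x : V) : pred V := connect (uadj S) x.

Definition consec (p : seq V) : seq (V * V) := zip p (behead p).

(* The component of x is an isolated vertex or a simple directed path:
   its vertices can be listed without repetition as v_0, ..., v_k so that
   the edges of S inside it are exactly (v_i, v_{i+1}). *)
Definition comp_is_path (S : {set V * V}) (x : V) : Prop :=
  exists p : seq V,
    [/\ uniq p,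
        (forall y, (y \in p) = comp S x y),
        (forall a b, (a, b) \in S -> a \in p -> (a, b) \in consec p) &
        (forall ab, ab \in consec p -> ab \in S)].

Definition multipath (E S : {set V * V}) : Prop :=
  S \subset E /\ forall x : V, comp_is_path S x.

Definition path_cover (E x y : {set V * V}) : Prop :=
  [/\ multipath E x, multipath E y, x \proper y &
      ~ exists z, [/\ multipath E z, x \proper z & z \proper y]].

Definition sign_assignment (E : {set V * V})
    (eps : {set V * V} -> {set V * V} -> 'Z_2) : Prop :=
  forall x y y' z, y != y' ->
    path_cover E x y -> path_cover E y z ->
    path_cover E x y' -> path_cover E y' z ->
    eps x y + eps y z = eps x y' + eps y' z + 1.

End PathPoset.

(* Two sign assignments differ by a function on covering pairs whose sum around
   every square vanishes, the two [+ 1]s cancelling in Z_2.  A covering pair of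
   the path poset adds a single edge, and every subset of a multipath is a
   multipath (deleting an edge splits one path component in two), so the
   multipaths form a down-closed family of edge sets.  On such a family,
   summing a square-closed function along a chain that adds the edges of x one
   at a time gives a value independent of the order of the edges: two orders
   differ by adjacent transpositions, and each transposition replaces one side
   of a square by the other.  This potential is the required eta. *)

From mathcomp Require Import all_boot all_order all_algebra.
Import GRing.Theory.
Local Open Scope ring_scope.

Set Implicit Arguments. Unset Strict Implicit.

Lemma mem_uniq_catl (T : eqType) (l r : seq T) y :
  uniq (l ++ r) -> y \in l -> (y \in r) = false.
Proof.
by rewrite cat_uniq => /and3P[_ /hasPn lr _] yl; apply/negP => /lr; rewrite yl.
Qed.

Lemma set_seq_perm (T : finType) (s t : seq T) : perm_eq s t -> [set:: s] = [set:: t].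
Proof. by move=> st; apply/setP => y; rewrite !inE (perm_mem st). Qed.

Section Multipaths.
Variable V : finType.
Implicit Types (S T : {set V * V}) (p q l r : seq V) (a b c d x : V).

Lemma mem_consec p a b : (a, b) \in consec p -> (a \in p) && (b \in p).
Proof.
elim: p => [|y [|z p] IH] //; rewrite [consec _]/= inE => /orP[/eqP[-> ->]|/IH].
  by rewrite !inE !eqxx orbT.
by case/andP=> ha hb; rewrite !(in_cons y) ha hb !orbT.
Qed.

Lemma consec_rcons_cat p1 a b p2 :
  consec (rcons p1 a ++ b :: p2) = consec (rcons p1 a) ++ (a, b) :: consec (b :: p2).
Proof.
elim: p1 => [|y [|z p1] IH] //.
by move: IH; rewrite /consec /= => ->.
Qed.

Lemma mem_consec_split p a b : (a, b) \in consec p ->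
  exists p1 p2, p = rcons p1 a ++ b :: p2.
Proof.
elim: p => [|y [|z p] IH] //; rewrite [consec _]/= inE => /orP[/eqP[-> ->]|/IH].
  by exists [::], p.
by case=> p1 [p2 ->]; exists (y :: p1), p2.
Qed.

Lemma uadj_sym S : symmetric (uadj S).
Proof. by move=> x y; rewrite /uadj orbC. Qed.

Lemma connect_consec S q y z : {subset consec q <= S} ->
  y \in q -> z \in q -> connect (uadj S) y z.
Proof.
move=> qS; suff head_conn w : w \in q -> connect (uadj S) (head y q) w.
  move=> yq /head_conn; apply: connect_trans.
  by rewrite (sym_connect_sym (@uadj_sym S)) head_conn.
elim: q qS => [|u [|v q] IH] //= qS; rewrite in_cons => /predU1P[->|wq];
  rewrite ?connect0 //; apply: connect_trans (IH _ wq).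
  by apply: connect1; rewrite /uadj qS // inE eqxx.
by move=> e he; apply: qS; rewrite inE he orbT.
Qed.

Definition component_path S x p :=
  [/\ uniq p, x \in p, {subset consec p <= S} &
      forall a b, (a, b) \in S -> (a \in p) || (b \in p) -> (a, b) \in consec p].

(* Connectivity is not mentioned: a path closed under incident edges of [S]
   is automatically a whole component. *)
Lemma comp_is_pathP S x : comp_is_path S x <-> exists p, component_path S x p.
Proof.
split=> [[p [up compE Sp pS]] | [p [up xp pS Sp]]].
  have xp : x \in p by rewrite compE; apply: connect0.
  exists p; split=> // a b ab /orP[ap|bp]; apply: Sp => //.
  rewrite compE; apply: connect_trans (_ : connect (uadj S) x b) _.
    by rewrite -[_ x b]compE.
  by apply: connect1; rewrite /uadj ab orbT.
have p_closed : closed (uadj S) (mem p).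
  move=> c d cd; suff in_p u v : (u, v) \in S -> (u \in p) || (v \in p) ->
      (u \in p) && (v \in p).
    by apply/idP/idP=> hm; case/orP: cd => /in_p; rewrite hm ?orbT => /(_ isT) /andP[].
  by move=> uv /(Sp _ _ uv) /mem_consec.
exists p; split=> // [y | a b ab ap]; last by rewrite Sp ?ap.
apply/idP/idP=> [yp|]; first exact: connect_consec xp yp.
by move/(closed_connect p_closed) <-.
Qed.

(* [l] is the piece of [p] that contains [x] once the edge [e] is deleted. *)
Lemma component_path_piece S x p l r e :
  component_path S x p -> uniq (l ++ r) -> x \in l -> {subset l <= p} ->
  {subset consec l <= consec p} -> {subset consec p <= e :: consec l ++ consec r} ->
  e \notin consec l -> component_path (S :\ e) x l.
Proof.
case=> _ _ pS Sp ulr xl lp lp' pl el.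
have ul : uniq l by move: ulr; rewrite cat_uniq => /and3P[].
split=> // [f fl | a b].
  by rewrite in_setD1 pS ?lp' // andbT; apply: contraNneq el => <-.
rewrite in_setD1 => /andP[ne ab] touch.
have /pl : (a, b) \in consec p.
  by apply: Sp => //; case/orP: touch => /lp ->; rewrite ?orbT.
rewrite in_cons (negbTE ne) mem_cat /= => /orP[// | /mem_consec /andP[ar br]].
by case/orP: touch => /(mem_uniq_catl ulr); rewrite ?ar ?br.
Qed.

Lemma comp_is_path_setD1 S x e : comp_is_path S x -> comp_is_path (S :\ e) x.
Proof.
move=> /comp_is_pathP [p cp]; apply/comp_is_pathP; have [up xp _ _] := cp.
case: (boolP (e \in consec p)) => [|ep]; last first.
  exists p; apply: (component_path_piece (r := [::]) cp) => // [|f fp].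
    by rewrite cats0.
  by rewrite cats0 in_cons fp orbT.
case: e => a b /mem_consec_split [l0 [r0 Ep]].
have Ec := consec_rcons_cat l0 a b r0; rewrite -Ep in Ec.
set l := rcons l0 a in Ep Ec; set r := b :: r0 in Ep Ec.
have al : a \in l by rewrite mem_rcons mem_head.
have br : b \in r by rewrite mem_head.
have ulr : uniq (l ++ r) by rewrite -Ep.
have pE y : (y \in p) = (y \in l) || (y \in r) by rewrite Ep mem_cat.
have pcE f : (f \in consec p) = (f == (a, b)) || (f \in consec l) || (f \in consec r).
  by rewrite Ec mem_cat in_cons orbCA orbA.
case: (boolP (x \in l)) => xl.
  exists l; apply: (component_path_piece (r := r) cp) => // [y|f|f|].
  - by rewrite pE => ->.
  - by rewrite pcE => ->; rewrite orbT.
  - by rewrite pcE in_cons mem_cat orbA.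
  - by apply/negP => /mem_consec /andP[_ bl]; rewrite (mem_uniq_catl ulr bl) in br.
have xr : x \in r by move: xp; rewrite pE (negbTE xl).
exists r; apply: (component_path_piece (r := l) cp) => // [|y|f|f|].
- by rewrite uniq_catC.
- by rewrite pE => ->; rewrite orbT.
- by rewrite pcE => ->; rewrite orbT.
- by rewrite pcE in_cons mem_cat orbA orbAC.
- by apply/negP => /mem_consec /andP[ar _]; rewrite (mem_uniq_catl ulr al) in ar.
Qed.

Lemma multipath_setD1 E S e : multipath E S -> multipath E (S :\ e).
Proof.
case=> SE Spath; split=> [|x]; last exact: comp_is_path_setD1.
by apply: subset_trans SE; apply: subsetDl.
Qed.

Lemma multipath_sub E S T : T \subset S -> multipath E S -> multipath E T.
Proof.
have [n] := ubnP #|S :\: T|; elim: n S => // n IH S lt_n TS mS.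
case: (set_0Vmem (S :\: T)) => [/eqP| [e]].
  rewrite setD_eq0 => ST; suff -> : T = S by [].
  by apply/eqP; rewrite eqEsubset TS ST.
rewrite in_setD => /andP[eT eS].
apply: (IH (S :\ e)); last exact: multipath_setD1.
  by rewrite setDDl setUC -setDDl; move: lt_n; rewrite (cardsD1 e) in_setD eT eS.
apply/subsetP => f fT; rewrite in_setD1 (subsetP TS) // andbT.
by apply: contraNneq eT => <-.
Qed.

Lemma path_cover_setU1 E (x : {set V * V}) (a : V * V) :
  multipath E (a |: x) -> a \notin x -> path_cover E x (a |: x).
Proof.
move=> mxa ax; split=> //; first exact: multipath_sub (subsetUr _ _) mxa.
  by rewrite properEcard subsetUr cardsU1 ax add1n ltnSn.
case=> z [_ /proper_card xz /proper_card za].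
by move: (leq_ltn_trans xz za); rewrite cardsU1 ax add1n ltnn.
Qed.

Lemma path_cover_setU1_inv E (x y : {set V * V}) :
  path_cover E x y -> exists2 a, a \notin x & y = a |: x.
Proof.
case=> _ my /properP[xy [a ay ax]] no_mid; exists a => //.
case: (eqVneq y (a |: x)) => // ne; case: no_mid; exists (y :\ a); split.
- exact: multipath_setD1.
- rewrite properEneq; apply/andP; split.
    by apply: contra_neq ne => ->; rewrite setD1K.
  apply/subsetP => f fx; rewrite in_setD1 (subsetP xy) // andbT.
  by apply: contraNneq ax => <-.
- exact: properD1.
Qed.
End Multipaths.

Section Potential.
Variables (T : finType) (R : zmodType) (P : {set T} -> Prop) (d : {set T} -> T -> R).
Hypothesis P_sub : forall A B : {set T}, B \subset A -> P A -> P B.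
Hypothesis d_square : forall (A : {set T}) (a b : T),
  P (a |: (b |: A)) -> a != b -> a \notin A -> b \notin A ->
  d A a + d (a |: A) b = d A b + d (b |: A) a.

Fixpoint potential_seq (s : seq T) : R :=
  if s is a :: s' then potential_seq s' + d [set:: s'] a else 0.

Definition potential (A : {set T}) : R := potential_seq (enum A).

Lemma potential_seq_rem s a : uniq s -> P [set:: s] -> a \in s ->
  potential_seq s = potential_seq (a :: rem a s).
Proof.
elim: s => [|b s IH] //= /andP[bs us] Ps; case: (eqVneq a b) => [-> //|ab].
rewrite in_cons (negbTE ab) /= => as_.
have Ps' : P [set:: s] by apply: P_sub Ps; rewrite set_cons subsetUr.
rewrite (IH us Ps' as_) /=; set r := rem a s.
have sE : [set:: s] = a |: [set:: r].
  by rewrite -set_cons (set_seq_perm (perm_to_rem as_)).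
have ar : a \notin [set:: r] by rewrite inE mem_rem_uniqF.
have br : b \notin [set:: r] by rewrite inE; apply: contra bs; apply: mem_rem.
rewrite sE -!addrA d_square ?set_cons //.
by rewrite setUCA -sE -set_cons.
Qed.

Lemma potential_seq_perm s t : uniq s -> perm_eq s t -> P [set:: s] ->
  potential_seq s = potential_seq t.
Proof.
elim: s t => [|a s IH] t us st Ps; first by case: t st => // b t /perm_size.
have at_ : a \in t by rewrite -(perm_mem st) mem_head.
have Pt : P [set:: t] by rewrite -(set_seq_perm st).
rewrite (potential_seq_rem _ Pt at_) -?(perm_uniq st) //=.
have st' : perm_eq s (rem a t).
  by rewrite -(perm_cons a); apply: perm_trans st (perm_to_rem at_).
have Ps' : P [set:: s] by apply: P_sub Ps; rewrite set_cons subsetUr.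
by move: us => /andP[_ us]; rewrite (IH _ us st' Ps') (set_seq_perm st').
Qed.

Lemma potential_setU1 A a : P (a |: A) -> a \notin A ->
  potential (a |: A) = potential A + d A a.
Proof.
move=> PaA aA; have perm_aA : perm_eq (enum (a |: A)) (a :: enum A).
  apply: uniq_perm; rewrite /= ?mem_enum ?aA ?enum_uniq // => y.
  by rewrite in_cons !mem_enum in_setU1.
rewrite /potential (potential_seq_perm (enum_uniq _) perm_aA) ?set_enum //=.
by rewrite set_enum.
Qed.

End Potential.

Section SignAssignments.
Variables (V : finType) (E : {set V * V}).
Implicit Types (x : {set V * V}) (a b : V * V) (eps : {set V * V} -> {set V * V} -> 'Z_2).

Lemma sign_assignment_square eps x a b : sign_assignment E eps ->
  multipath E (a |: (b |: x)) -> a != b -> a \notin x -> b \notin x ->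
  eps x (a |: x) + eps (a |: x) (b |: (a |: x)) =
  eps x (b |: x) + eps (b |: x) (a |: (b |: x)) + 1.
Proof.
move=> sa mabx ab ax bx.
have bax : b \notin a |: x by rewrite in_setU1 negb_or eq_sym ab.
have abx : a \notin b |: x by rewrite in_setU1 negb_or ab.
have mbax : multipath E (b |: (a |: x)) by rewrite setUCA.
rewrite [b |: _]setUCA; apply: (sa _ _ _ (a |: (b |: x))).
- by apply: contraNneq bax => ->; rewrite setU11.
- by apply: path_cover_setU1 ax; apply: multipath_sub mbax; rewrite subsetUr.
- by rewrite setUCA; apply: path_cover_setU1.
- by apply: path_cover_setU1 bx; apply: multipath_sub mabx; rewrite subsetUr.
- exact: path_cover_setU1.
Qed.

Definition sign_diff eps eps' x a : 'Z_2 := eps' x (a |: x) - eps x (a |: x).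

Lemma sign_diff_square eps eps' :
  sign_assignment E eps -> sign_assignment E eps' -> forall x a b,
  multipath E (a |: (b |: x)) -> a != b -> a \notin x -> b \notin x ->
  sign_diff eps eps' x a + sign_diff eps eps' (a |: x) b =
  sign_diff eps eps' x b + sign_diff eps eps' (b |: x) a.
Proof.
move=> sa sa' x a b mabx ab ax bx.
rewrite /sign_diff [LHS]addrACA [RHS]addrACA -!opprD.
rewrite (sign_assignment_square sa) // (sign_assignment_square sa') //.
by rewrite [in X in _ - X = _]addrC addrKA.
Qed.

End SignAssignments.

Theorem corollary3p17 (V : finType) (E : {set V * V})
    (E_loopless : forall v : V, (v, v) \notin E)
    (eps eps' : {set V * V} -> {set V * V} -> 'Z_2) :
  sign_assignment E eps -> sign_assignment E eps' ->
  exists eta : {set V * V} -> 'Z_2,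
    forall x y, path_cover E x y -> eta x + eps' x y = eps x y + eta y.
Proof.
move=> sa sa'; exists (potential (sign_diff eps eps')) => x y cxy.
have [[_ my _ _] [a ax Ey]] := (cxy, path_cover_setU1_inv cxy); subst y.
rewrite (potential_setU1 (@multipath_sub _ E) (sign_diff_square sa sa') my ax).
by rewrite /sign_diff [RHS]addrC -addrA subrK.
Qed.
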